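(* Let $\phi$ and $\psi$ be Drinfeld modules over $K$ with $\operatorname{rk}\phi>\operatorname{rk}\psi$, and put $n=\operatorname{rk}\phi$. Let $K\{\tau\}_{<n}=\{w\in K\{\tau\}\mid \deg_\tau w<n\}$. Then there is an $\mathbb F_q$-linear isomorphism $\operatorname{Ext}^1_\tau(\phi,\psi)\cong K\{\tau\}_{<n}$; namely, the map sending $w\in K\{\tau\}_{<n}$ to the class of the biderivation $\delta$ with $\delta(t)=w$ is an isomorphism of $\mathbb F_q$-vector spaces $K\{\tau\}_{<n}\to \mathrm{Der}(\phi,\psi)/\mathrm{Der}_{in}(\phi,\psi)$.
   Context: Let $q$ be a power of a prime $p$, $A=\mathbb F_q[t]$, and $K$ a field of characteristic $p$ with an $\mathbb F_q$-algebra homomorphism $\iota:A\to K$; put $\theta=\iota(t)$. $K\{\tau\}$ is the ring of twisted polynomials $\sum_i a_i\tau^i$ ($a_i\in K$) with $\tau x=x^q\tau$; write $c^{(i)}=c^{q^i}$. A $\mathbf t$-module of dimension $d$ over $K$ is an $\mathbb F_q$-algebra homomorphism $\Phi:\mathbb F_q[t]\to \mathrm{Mat}_d(K\{\tau\})$ with $\Phi_t:=\Phi(t)=(\theta I_d+N)+M_1\tau+\dots+M_r\tau^r$, $N$ nilpotent, $M_i\in\mathrm{Mat}_d(K)$; its rank $\operatorname{rk}\Phi$ is the $\tau$-degree of $\Phi_t$. A Drinfeld module is a $\mathbf t$-module of dimension $1$, i.e. $\phi_t=\theta+\sum_{i=1}^n a_i\tau^i$. For $\mathbf t$-modules $\Phi$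 (dimension $d$) and $\Psi$ (dimension $e$), $\mathrm{Der}(\Phi,\Psi)$ is the $\mathbb F_q$-space of $\mathbb F_q$-linear maps $\delta:\mathbb F_q[t]\to\mathrm{Mat}_{e\times d}(K\{\tau\})$ with $\delta(ab)=\Psi_a\delta(b)+\delta(a)\Phi_b$; such $\delta$ is determined by $\delta(t)$, and every value of $\delta(t)$ occurs. The inner biderivations $\mathrm{Der}_{in}(\Phi,\Psi)$ are those of the form $\delta^{(U)}(a)=U\Phi_a-\Psi_aU$ with $U\in\mathrm{Mat}_{e\times d}(K\{\tau\})$. $\operatorname{Ext}^1_\tau(\Phi,\Psi)$ (the group of extensions $0\to\Psi\to X\to\Phi\to0$ of $\mathbf t$-modules with Baer sum) is identified with $\mathrm{Der}(\Phi,\Psi)/\mathrm{Der}_{in}(\Phi,\Psi)$, the class of $\delta$ corresponding to the extension with middle term $X_t=\begin{bmatrix}\Phi_t&0\\ \delta(t)&\Psi_t\end{bmatrix}$; its $\mathbb F_q[t]$-module structure is $a*[\delta]=[\Psi_a\delta]$. *)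

From HB Require Import structures.
From mathcomp Require Import all_boot all_order all_algebra.
Set Implicit Arguments. Unset Strict Implicit. Unset Printing Implicit Defensive.
Import GRing.Theory.
Local Open Scope ring_scope.

(* Setting: F = F_q is a finite field (q = #|F|), K a field with an embedding
   iota : F -> K (so K is an F_q-algebra of characteristic p).  A = {poly F}
   = F_q[t], and 'X : {poly F} is t.
   The twisted polynomial ring K{tau} is modelled on the coefficient type
   {poly K}: p = \sum_i p`_i tau^i, with the usual addition and the twisted
   product tmul below (tau x = x^q tau). *)

Section Twisted.
Variables (F : finFieldType) (K : fieldType) (iota : {rmorphism F -> K}).

Definition qq : nat := #|F|.

(* (sum_i a_i tau^i)(sum_j b_j tau^j) = sum_{i,j} a_i b_j^(q^i) tau^(i+j) *)
Definition tmul (a b : {poly K}) : {poly K} :=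
  \poly_(k < size a + size b)
    (\sum_(i < k.+1) a`_i * (b`_(k - i)) ^+ (qq ^ i)).

Definition tpow (a : {poly K}) (k : nat) : {poly K} := iter k (tmul a) 1.

(* The F_q-algebra homomorphism phi : F_q[t] -> K{tau} determined by
   phi_t = phit:  phi_a = \sum_i iota(a_i) phit^i. *)
Definition dmod (phit : {poly K}) (a : {poly F}) : {poly K} :=
  \sum_(i < size a) iota a`_i *: tpow phit i.

Definition is_bider (phit psit : {poly K}) (delta : {poly F} -> {poly K}) :=
  (forall (c : F) (a b : {poly F}),
      delta (c *: a + b) = iota c *: delta a + delta b) /\
  (forall a b : {poly F},
      delta (a * b) = tmul (dmod psit a) (delta b) + tmul (delta a) (dmod phit b)).

Definition is_inner (phit psit : {poly K}) (delta : {poly F} -> {poly K}) :=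
  exists U : {poly K},
    forall a : {poly F}, delta a = tmul U (dmod phit a) - tmul (dmod psit a) U.

End Twisted.

From HB Require Import structures.
From mathcomp Require Import all_boot all_order all_algebra all_field zify.
Set Implicit Arguments. Unset Strict Implicit. Unset Printing Implicit Defensive.
Import GRing.Theory.
Local Open Scope ring_scope.

(* A biderivation delta in Der(phi, psi) is determined by w = delta(t), and every
   w occurs: delta_w(a) is the lower-left entry of X_a for the t-module
   X_t = [[phi_t, 0], [w, psi_t]] with values in 2x2 matrices over K{tau}.
   The inner biderivation delta^(U) has value U phi_t - psi_t U at t; as
   deg psi_t < deg phi_t = n, this has degree deg U + n and leading coefficient
   lead(U) lead(phi_t)^(q^deg U).  Hence no nonzero value of an inner
   biderivation at t has degree < n, and repeatedly cancelling leading terms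
   writes any w as r + (U phi_t - psi_t U) with deg r < n. *)

Lemma size_sub_lead_lt (R : nzRingType) (p q : {poly R}) :
  p != 0 -> size q = size p -> lead_coef q = lead_coef p -> (size (p - q)%R < size p)%N.
Proof.
move=> nz_p eq_size eq_lead; rewrite (polySpred nz_p) ltnS.
apply/leq_sizeP => j; rewrite leq_eqVlt => /predU1P[<-|lt_j].
  by rewrite coefB -eq_size -lead_coefE eq_lead eq_size subrr.
have le_pj : (size p <= j)%N by rewrite (polySpred nz_p).
by rewrite coefB !nth_default ?subrr ?eq_size.
Qed.

Lemma central_scalar_mx_comm (R : pzRingType) n (A : 'M[R]_n) (a : R) :
  (forall x, GRing.comm x a) -> GRing.comm A a%:M.
Proof.
move=> a_central; rewrite /GRing.comm -!mulmxE -diag_const_mx mul_mx_diag mul_diag_mx.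
by apply/matrixP => i j; rewrite !mxE a_central.
Qed.

Lemma mulmx2E (R : pzRingType) (A B : 'M[R]_2) i j :
  (A * B) i j = A i ord0 * B ord0 j + A i ord_max * B ord_max j.
Proof.
rewrite -mulmxE mxE !big_ord_recl big_ord0 addr0.
by have -> : lift ord0 ord0 = ord_max :> 'I_2 by apply: val_inj.
Qed.

Section Frobenius.
Variables (F : finFieldType) (K : fieldType) (iota : {rmorphism F -> K}).
Local Notation q := (qq F).

Definition frob (i : nat) (x : K) : K := x ^+ (q ^ i).

Lemma qq_gt0 : (0 < q)%N.
Proof. by apply/card_gt0P; exists 0. Qed.

Lemma pnat_qq_pow i : [pchar K].-nat (q ^ i)%N.
Proof.
have [p p_pr pcharF] := finPcharP F.
rewrite /qq (card_pprimeChar pcharF) -expnM pnatX (pnatE _ p_pr).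
by rewrite (rmorph_pchar iota pcharF).
Qed.

Lemma frob0_id x : frob 0 x = x.
Proof. by rewrite /frob expn0 expr1. Qed.

Lemma frob0 i : frob i 0 = 0.
Proof. by rewrite /frob expr0n expn_eq0 eqn0Ngt qq_gt0. Qed.

Lemma frob1 i : frob i 1 = 1.
Proof. exact: expr1n. Qed.

Lemma frobD i : {morph frob i : x y / x + y}.
Proof. by move=> x y; apply: exprDn_pchar (pnat_qq_pow i). Qed.

Lemma frobM i : {morph frob i : x y / x * y}.
Proof. by move=> x y; apply: exprMn. Qed.

Lemma frob_sum i (I : Type) (r : seq I) (P : pred I) (G : I -> K) :
  frob i (\sum_(j <- r | P j) G j) = \sum_(j <- r | P j) frob i (G j).
Proof. by elim/big_rec2: _ => [|j a b _ <-]; rewrite ?frob0 ?frobD. Qed.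

Lemma frob_frob i j x : frob j (frob i x) = frob (i + j) x.
Proof. by rewrite /frob -exprM -expnD. Qed.

Lemma frob_eq0 i x : (frob i x == 0) = (x == 0).
Proof. by rewrite expf_eq0 expn_gt0 qq_gt0. Qed.

Lemma frob_iota i c : frob i (iota c) = iota c.
Proof.
elim: i => [|i IH]; first exact: frob0_id.
by rewrite /frob expnSr exprM -/(frob i _) IH -rmorphXn /qq expf_card.
Qed.

End Frobenius.

Section TwistedRing.
Variables (F : finFieldType) (K : fieldType) (iota : {rmorphism F -> K}).
Local Notation frob := (@frob F K).
Local Notation tmul := (@tmul F K).

Lemma coef_tmul a b k : (tmul a b)`_k = \sum_(j < k.+1) a`_j * frob j b`_(k - j).
Proof.
rewrite coef_poly; case: ltnP => // le_k; rewrite big1 // => j _.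
have [le_a|lt_a] := leqP (size a) j; first by rewrite nth_default ?mul0r.
by rewrite [b`_ _]nth_default ?frob0 ?mulr0 //; move: lt_a le_k; case: j => j /= _; lia.
Qed.

Lemma tmulA : associative tmul.
Proof.
move=> a b c; apply/polyP => i.
pose G j m := a`_j * frob j b`_(m - j) * frob m c`_(i - m).
transitivity (\sum_(0 <= j < i.+1) \sum_(j <= m < i.+1) G j m).
  rewrite coef_tmul big_mkord; apply: eq_bigr => j _.
  rewrite (big_addn 0 _ j) coef_tmul (frob_sum iota) big_distrr subSn ?leq_ord //=.
  rewrite big_mkord; apply: eq_bigr => l _.
  by rewrite frobM frob_frob mulrA /G addnK subnDA subnAC.
transitivity (\sum_(0 <= m < i.+1) \sum_(0 <= j < i.+1 | (j <= m)%N) G j m).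
  rewrite (exchange_big_dep_nat predT) //=; apply: eq_bigr => j _.
  by rewrite (big_nat_widenl _ 0).
rewrite coef_tmul big_mkord; apply: eq_bigr => m _.
by rewrite coef_tmul big_distrl /= -(big_nat_widen 0 m.+1 i.+1 xpredT (G^~ m)) // big_mkord.
Qed.

Lemma tmul1l : left_id 1 tmul.
Proof.
move=> b; apply/polyP => i; rewrite coef_tmul big_ord_recl coefC /= frob0_id mul1r subn0.
by rewrite big1 ?addr0 // => j _; rewrite coefC mul0r.
Qed.

Lemma tmul1r : right_id 1 tmul.
Proof.
move=> a; apply/polyP => i; rewrite coef_tmul big_ord_recr coefC subnn /= frob1 mulr1.
by rewrite big1 ?add0r // => j _; rewrite coefC subn_eq0 leqNgt ltn_ord frob0 mulr0.
Qed.

Lemma tmulDl : left_distributive tmul +%R.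
Proof.
move=> a b c; apply/polyP => i; rewrite coefD !coef_tmul -big_split /=.
by apply: eq_bigr => j _; rewrite coefD mulrDl.
Qed.

Lemma tmulDr : right_distributive tmul +%R.
Proof.
move=> a b c; apply/polyP => i; rewrite coefD !coef_tmul -big_split /=.
by apply: eq_bigr => j _; rewrite coefD (frobD iota) mulrDr.
Qed.

(* The carrier is {poly K}; [iota] is only there to record that [K] has the
   characteristic of [F], which right distributivity needs. *)
Definition twisted of {rmorphism F -> K} : Type := {poly K}.
Local Notation T := (twisted iota).

HB.instance Definition _ := GRing.Zmodule.on T.
HB.instance Definition _ := GRing.Zmodule_isNzRing.Build T
  tmulA tmul1l tmul1r tmulDl tmulDr (@oner_neq0 {poly K}).

Lemma tmulE (a b : {poly K}) : tmul a b = (a : T) * (b : T).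
Proof. by []. Qed.

Lemma tpowE (a : {poly K}) k : tpow F a k = (a : T) ^+ k.
Proof. by elim: k => //= k ->; rewrite exprS. Qed.

Definition tconst (c : F) : T := (iota c)%:P.

Lemma tconstM c (p : T) : tconst c * p = iota c *: (p : {poly K}).
Proof.
apply/polyP => k; rewrite coef_tmul big_ord_recl coefC /= frob0_id subn0 coefZ.
by rewrite big1 ?addr0 // => j _; rewrite coefC mul0r.
Qed.

Lemma tconst_comm (p : T) c : GRing.comm p (tconst c).
Proof.
rewrite /GRing.comm tconstM; apply/polyP => k.
rewrite coef_tmul big_ord_recr coefC subnn /= (frob_iota iota) coefZ mulrC.
by rewrite big1 ?add0r // => j _; rewrite coefC subn_eq0 leqNgt ltn_ord frob0 mulr0.
Qed.

Fact tconst_is_zmod_morphism : zmod_morphism tconst.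
Proof. by move=> x y; rewrite /tconst rmorphB polyCB. Qed.

Fact tconst_is_monoid_morphism : monoid_morphism tconst.
Proof.
split=> [|x y]; first by rewrite /tconst rmorph1.
by rewrite tconstM /tconst rmorphM polyCM mul_polyC.
Qed.

HB.instance Definition _ :=
  GRing.isZmodMorphism.Build F T tconst tconst_is_zmod_morphism.
HB.instance Definition _ :=
  GRing.isMonoidMorphism.Build F T tconst tconst_is_monoid_morphism.

Definition teval (u : T) : {poly F} -> T := horner_morph (fun c => tconst_comm u c).

Lemma dmodE (u : {poly K}) a : dmod iota u a = teval u a.
Proof.
rewrite /teval /horner_morph horner_coef size_map_poly /dmod.
by apply: eq_bigr => i _; rewrite coef_map /= tconstM tpowE.
Qed.

Lemma tevalZ u c a : teval u (c *: a) = tconst c * teval u a.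
Proof. by rewrite /teval -mul_polyC rmorphM /= horner_morphC. Qed.

Lemma teval_MXC u a c : teval u (a * 'X + c%:P) = teval u a * u + tconst c.
Proof. by rewrite /teval rmorphD rmorphM /= horner_morphX horner_morphC. Qed.

End TwistedRing.

Section TwistedDegree.
Variables (F : finFieldType) (K : fieldType).
Local Notation frob := (frob F).
Local Notation tmul := (@tmul F K).

Lemma size_tmul_le a b : (size (tmul a b) <= (size a + size b).-1)%N.
Proof.
apply/leq_sizeP => k le_k; rewrite coef_tmul big1 // => j _.
have [le_a|lt_a] := leqP (size a) j; first by rewrite nth_default ?mul0r.
by rewrite [b`_ _]nth_default ?frob0 ?mulr0 //; move: lt_a le_k; case: j => j /= _; lia.
Qed.

Lemma coef_tmul_top a b :
  (tmul a b)`_((size a).-1 + (size b).-1) = lead_coef a * frob (size a).-1 (lead_coef b).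
Proof.
set k := ((size a).-1 + (size b).-1)%N.
have lt_ak : ((size a).-1 < k.+1)%N by rewrite ltnS leq_addr.
rewrite coef_tmul (bigD1 (Ordinal lt_ak)) //= addKn big1 ?addr0 // => j.
rewrite -val_eqE /= => ne_j.
have [le_a|lt_a] := leqP (size a) j; first by rewrite nth_default ?mul0r.
rewrite [b`_ _]nth_default ?frob0 ?mulr0 //.
by move: ne_j lt_a; rewrite /k; case: j => j /= _ /eqP; lia.
Qed.

Lemma size_tmul a b : a != 0 -> b != 0 -> size (tmul a b) = (size a + size b).-1.
Proof.
move=> nz_a nz_b; have top_neq0 : (tmul a b)`_((size a).-1 + (size b).-1) != 0.
  by rewrite coef_tmul_top mulf_neq0 ?frob_eq0 ?lead_coef_eq0.
apply/eqP; rewrite eqn_leq size_tmul_le /= (polySpred nz_a) (polySpred nz_b) addnS /=.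
by apply: contraR top_neq0; rewrite -leqNgt => /leq_sizeP ->.
Qed.

Lemma lead_coef_tmul a b : a != 0 -> b != 0 ->
  lead_coef (tmul a b) = lead_coef a * frob (size a).-1 (lead_coef b).
Proof.
move=> nz_a nz_b; rewrite lead_coefE size_tmul // -coef_tmul_top.
by rewrite (polySpred nz_a) (polySpred nz_b) addnS.
Qed.

End TwistedDegree.

Section InnerDegree.
Variables (F : finFieldType) (K : fieldType) (iota : {rmorphism F -> K}).
Variables (phit psit : {poly K}).
Hypothesis lt_psi_phi : (size psit < size phit)%N.
Local Notation frob := (frob F).
Local Notation tmul := (@tmul F K).

Definition innerX (U : {poly K}) : {poly K} := tmul U phit - tmul psit U.

Lemma innerXD U V : innerX (U + V) = innerX U + innerX V.
Proof. by rewrite /innerX !(tmulE iota) mulrDl mulrDr opprD addrACA. Qed.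

Lemma innerX0 : innerX 0 = 0.
Proof. by rewrite /innerX !(tmulE iota) mulr0 mul0r subrr. Qed.

Lemma phit_neq0 : phit != 0.
Proof. by rewrite -size_poly_gt0 (leq_ltn_trans _ lt_psi_phi). Qed.

Lemma size_tmul_psi_lt U : U != 0 -> (size (tmul psit U) < size (tmul U phit))%N.
Proof.
move=> nz_U; rewrite (@size_tmul F K U phit) ?phit_neq0 //.
have := size_tmul_le F psit U; have := lt_psi_phi; rewrite -size_poly_gt0 in nz_U; lia.
Qed.

Lemma size_innerX U : U != 0 -> size (innerX U) = (size U + size phit).-1.
Proof.
move=> nz_U; rewrite size_polyDl ?size_polyN ?size_tmul_psi_lt //.
by rewrite size_tmul ?phit_neq0.
Qed.

Lemma lead_coef_innerX U : U != 0 ->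
  lead_coef (innerX U) = lead_coef U * frob (size U).-1 (lead_coef phit).
Proof.
move=> nz_U; rewrite lead_coefDl ?size_polyN ?size_tmul_psi_lt //.
by rewrite lead_coef_tmul ?phit_neq0.
Qed.

Lemma innerX_small_eq0 U : (size (innerX U) <= (size phit).-1)%N -> U = 0.
Proof.
apply: contraTeq => nz_U; rewrite size_innerX // -ltnNge.
by move: nz_U phit_neq0; rewrite -!size_poly_gt0; lia.
Qed.

Lemma innerX_division (w : {poly K}) :
  exists r U : {poly K}, (size r <= (size phit).-1)%N /\ w = r + innerX U.
Proof.
have [n] := ubnP (size w); elim: n w => // n IHn w lt_wn.
have [small|big] := leqP (size w) (size phit).-1.
  by exists w, 0; rewrite innerX0 addr0.
have nz_w : w != 0 by rewrite -size_poly_gt0 (leq_ltn_trans _ big).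
pose d := (size w - size phit)%N.
have nz_phi_d : frob d (lead_coef phit) != 0 by rewrite frob_eq0 lead_coef_eq0 phit_neq0.
pose c := lead_coef w / frob d (lead_coef phit).
have nz_c : c != 0 by rewrite mulf_neq0 ?invr_eq0 ?lead_coef_eq0.
pose U := c *: 'X^d.
have size_U : size U = d.+1 by rewrite size_scale ?size_polyXn.
have nz_U : U != 0 by rewrite -size_poly_gt0 size_U.
have size_eq : size (innerX U) = size w.
  by rewrite size_innerX // size_U /d; lia.
have lead_eq : lead_coef (innerX U) = lead_coef w.
  by rewrite lead_coef_innerX // size_U lead_coefZ lead_coefXn mulr1 divfK.
have [|r [V [small_r eq_w]]] := IHn (w - innerX U).
  by rewrite -ltnS (leq_trans _ lt_wn) // ltnS size_sub_lead_lt.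
by exists r, (V + U); rewrite innerXD addrA -eq_w subrK.
Qed.

End InnerDegree.

Section Biderivations.
Variables (F : finFieldType) (K : fieldType) (iota : {rmorphism F -> K}).
Local Notation T := (twisted iota).
Local Notation tconst := (tconst iota).
Variables (phit psit : T).

Definition bider (delta : {poly F} -> T) :=
  (forall c a b, delta (c *: a + b) = tconst c * delta a + delta b) /\
  (forall a b, delta (a * b) = teval psit a * delta b + delta a * teval phit b).

Lemma is_biderE (delta : {poly F} -> {poly K}) :
  is_bider iota phit psit delta <-> bider delta.
Proof.
rewrite /is_bider /bider; split=> -[lin mul].
  by split=> *; rewrite ?lin ?mul ?tconstM -?dmodE.
by split=> *; rewrite ?lin ?mul ?tconstM ?dmodE.
Qed.

Lemma bider0 delta : bider delta -> delta 0 = 0.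
Proof.
move=> [lin _]; have := lin 1 0 0; rewrite scale1r addr0 rmorph1 mul1r.
by rewrite -{1}[delta 0]addr0 => /addrI <-.
Qed.

Lemma bider1 delta : bider delta -> delta 1 = 0.
Proof.
move=> [_ mul]; have := mul 1 1; rewrite mulr1 /teval !rmorph1 mul1r mulr1.
by rewrite -{1}[delta 1]addr0 => /addrI <-.
Qed.

Lemma bider_eq d1 d2 : bider d1 -> bider d2 -> d1 'X = d2 'X -> d1 =1 d2.
Proof.
move=> bd1 bd2 eqX; elim/poly_ind => [|a c IH]; first by rewrite !bider0.
rewrite -[c%:P]mulr1 mul_polyC addrC bd1.1 bd2.1 bd1.2 bd2.2 !bider1 //.
by rewrite IH eqX.
Qed.

Lemma bider_lincomb c d1 d2 :
  bider d1 -> bider d2 -> bider (fun a => tconst c * d1 a + d2 a).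
Proof.
move=> [lin1 mul1] [lin2 mul2]; split=> [c' a b|a b].
  by rewrite lin1 lin2 !mulrDr !mulrA -!rmorphM [c * c']mulrC addrACA.
rewrite mul1 mul2 !mulrDr !mulrDl !mulrA (tconst_comm (teval psit a)).
by rewrite -!mulrA addrACA.
Qed.

Lemma bider_sub d1 d2 : bider d1 -> bider d2 -> bider (fun a => d1 a - d2 a).
Proof.
move=> [lin1 mul1] [lin2 mul2]; split=> [c a b|a b].
  by rewrite lin1 lin2 opprD addrACA mulrBr.
by rewrite mul1 mul2 opprD addrACA mulrBr mulrBl.
Qed.

Lemma bider_inner U : bider (fun a => U * teval phit a - teval psit a * U).
Proof.
split=> [c a b|a b].
  rewrite /teval !rmorphD /= -!/(teval _ _) !tevalZ mulrDr mulrDl opprD addrACA.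
  by rewrite mulrBr !mulrA (tconst_comm U) -!mulrA.
rewrite /teval !rmorphM /= -!/(teval _ _) mulrBr mulrBl !mulrA.
by rewrite [RHS]addrC addrA subrK.
Qed.

Definition ext_mx (w : T) : 'M[T]_2 :=
  \matrix_(i, j) if i == ord0 then (if j == ord0 then phit else 0)
                 else (if j == ord0 then w else psit).

Fact ext_mx_comm w : commr_rmorph (scalar_mx \o tconst) (ext_mx w).
Proof. by move=> c; apply: central_scalar_mx_comm => x; apply: tconst_comm. Qed.

Definition ext_eval (w : T) : {poly F} -> 'M[T]_2 := horner_morph (ext_mx_comm w).

Definition ext_bider (w : T) (a : {poly F}) : T := ext_eval w a ord_max ord0.

Lemma ext_eval_MXC w a c :
  ext_eval w (a * 'X + c%:P) = ext_eval w a * ext_mx w + (tconst c)%:M.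
Proof. by rewrite /ext_eval rmorphD rmorphM /= horner_morphX horner_morphC. Qed.

Lemma ext_eval_diag w a :
  [/\ ext_eval w a ord0 ord0 = teval phit a, ext_eval w a ord0 ord_max = 0
    & ext_eval w a ord_max ord_max = teval psit a].
Proof.
elim/poly_ind: a => [|a c [IH00 IH01 IH11]].
  by rewrite /ext_eval /teval !rmorph0 !mxE.
rewrite ext_eval_MXC !teval_MXC.
by split; rewrite mxE mulmx2E ?IH00 ?IH01 ?IH11 !mxE /= ?(mulr0, mul0r, add0r, addr0).
Qed.

Lemma ext_bider_X w : ext_bider w 'X = w.
Proof. by rewrite /ext_bider /ext_eval horner_morphX mxE. Qed.

Lemma ext_bider_bider w : bider (ext_bider w).
Proof.
rewrite /ext_bider; split=> [c a b|a b].
  rewrite {1}/ext_eval rmorphD -mul_polyC rmorphM /= horner_morphC.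
  by rewrite mxE -mulmxE mul_scalar_mx mxE.
have [_ _ psi_a] := ext_eval_diag w a.
have [phi_b _ _] := ext_eval_diag w b.
by rewrite {1}/ext_eval rmorphM /= mulmx2E phi_b psi_a addrC.
Qed.

End Biderivations.

Theorem lemma3p1 (F : finFieldType) (K : fieldType) (iota : {rmorphism F -> K})
    (theta : K) (phit psit : {poly K})
    (Hphi : phit`_0 = theta) (Hpsi : psit`_0 = theta)
    (Hrk : (size psit < size phit)%N) :
  let n := (size phit).-1 in
  exists f : {poly K} -> {poly F} -> {poly K},
    (* f w is the biderivation delta with delta(t) = w *)
    (forall w : {poly K}, is_bider iota phit psit (f w) /\ f w 'X = w) /\
    (* F_q-linearity *)
    (forall (c : F) (w1 w2 : {poly K}) (a : {poly F}),
        f (iota c *: w1 + w2) a = iota c *: f w1 a + f w2 a) /\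
    (* injectivity on K{tau}_{<n}: trivial kernel *)
    (forall w : {poly K}, (size w <= n)%N -> is_inner iota phit psit (f w) -> w = 0) /\
    (* surjectivity onto Der/Der_in *)
    (forall delta : {poly F} -> {poly K}, is_bider iota phit psit delta ->
        exists w : {poly K}, (size w <= n)%N /\
          is_inner iota phit psit (fun a => delta a - f w a)).
Proof.
move=> n; have f_bider w := @ext_bider_bider F K iota phit psit w.
exists (@ext_bider F K iota phit psit); split; [|split; [|split]].
- by move=> w; split; [apply/is_biderE | apply: ext_bider_X].
- move=> c w1 w2 a; rewrite -!tconstM.
  apply: (bider_eq (f_bider _) (bider_lincomb c (f_bider w1) (f_bider w2))).
  by rewrite !ext_bider_X tconstM.
- move=> w small_w [U inner_U]; move: (inner_U 'X) small_w.
  rewrite ext_bider_X !dmodE /teval !horner_morphX => -> /(innerX_small_eq0 Hrk) ->.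
  exact: (innerX0 iota).
- move=> delta /is_biderE bider_delta.
  have [r [U [small_r eq_deltaX]]] := innerX_division iota Hrk (delta 'X).
  exists r; split=> //; exists U => a; rewrite !dmodE.
  apply: (bider_eq (bider_sub bider_delta (f_bider r)) (bider_inner phit psit U)).
  by rewrite ext_bider_X /teval !horner_morphX eq_deltaX addrC addKr.
Qed.
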